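(* Let $P$ be a subsemigroup of a discrete group $Q$ and let $(X,P,T)$ be a directed locally compact semigroup action. Endow the semidirect product groupoid $G(X,P,T)$ with the topology $\mathcal T$ generated by the sets $Z(U,m,n,V)$. Then (a) $G(X,P,T)$ is an étale locally compact Hausdorff groupoid; (b) the canonical cocycle $c:G(X,P,T)\to Q$, $c(x,q,y)=q$, is continuous.
   Context: A right (partial) action of $P$ (identity $e$) on $X$: a subset $X*P\subset X\times P$ and $(x,m)\mapsto x\cdot m$ with $(x,e)\in X*P$, $x\cdot e=x$, and $(x,mn)\in X*P$ iff $(x,m)\in X*P$ and $(x\cdot m,n)\in X*P$, in which case $(x\cdot m)\cdot n=x\cdot(mn)$. $U(m)=\{x:(x,m)\in X*P\}$, $V(m)=\{x\cdot m\}$, $T_m:U(m)\to V(m)$, $T_mx=x\cdot m$; $m\le n$ iff $n=mp$ for some $p\in P$. Directed: whenever $U(m)\cap U(n)\ne\emptyset$ there is $r\ge m,n$ with $U(m)\cap U(n)=U(r)$. Locally compact: $X$ locally compact Hausdorff, $Q$ discrete, $U(m),V(m)$ open and $T_m$ a local homeomorphism. $G(X,P,T)=\{(x,q,y)\in X\times Q\times X: \exists m,n\in P, q=mn^{-1}, x\in U(m), y\in U(n), x\cdot m=y\cdot n\}$ with $(x,q,y)(y,q',z)=(x,qq',z)$, $(x,q,y)^{-1}=(y,q^{-1},x)$, unit space $X$ via $x\mapsto(x,e,x)$. For $m,n\in P$ and $U,V\subset X$ open, $Z(U,m,n,V)=\{(x,mn^{-1},y)\in G(X,P,T): x\in U,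 y\in V, x\cdot m=y\cdot n\}$; these sets form a basis for $\mathcal T$. *)

From HB Require Import structures.
From mathcomp Require Import all_boot all_classical.
From mathcomp Require Import topology.


Local Open Scope classical_set_scope.

Record group_str (Q : Type) := GroupStr {
  gmul : Q -> Q -> Q;
  ginv : Q -> Q;
  gone : Q;
  gmulA : forall a b c, gmul a (gmul b c) = gmul (gmul a b) c;
  gmul1l : forall a, gmul gone a = a;
  gmul1r : forall a, gmul a gone = a;
  gmulVl : forall a, gmul (ginv a) a = gone;
  gmulVr : forall a, gmul a (ginv a) = gone }.
Arguments gmul {Q} g _ _.
Arguments ginv {Q} g _.
Arguments gone {Q} g.

Definition subsemigroup_with_e {Q : Type} (GQ : group_str Q) (P : set Q) :=
  P (gone GQ) /\ forall m n, P m -> P n -> P (gmul GQ m n).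

(** Data of a right partial action of P on X:
    [adom x m] means (x,m) \in X*P, [act x m] is x.m. *)
Record sg_action (X Q : Type) := SgAction {
  sP : set Q;
  adom : X -> Q -> Prop;
  act : X -> Q -> X }.
Arguments sP {X Q} s _.
Arguments adom {X Q} s _ _.
Arguments act {X Q} s _ _.


Definition U_ {X Q : Type} (A : sg_action X Q) (m : Q) : set X :=
  [set x | adom A x m].
Definition V_ {X Q : Type} (A : sg_action X Q) (m : Q) : set X :=
  (fun x => act A x m) @` U_ A m.

Definition ple {X Q : Type} (GQ : group_str Q) (A : sg_action X Q) (m n : Q) :=
  exists2 p, sP A p & n = gmul GQ m p.

Definition is_right_action {X Q : Type} (GQ : group_str Q) (A : sg_action X Q) :=
  (forall x, adom A x (gone GQ) /\ act A x (gone GQ) = x) /\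
  (forall x m n, sP A m -> sP A n ->
     (adom A x (gmul GQ m n) <-> (adom A x m /\ adom A (act A x m) n)) /\
     (adom A x (gmul GQ m n) ->
        act A (act A x m) n = act A x (gmul GQ m n))).

Definition directed_action {X Q : Type} (GQ : group_str Q) (A : sg_action X Q) :=
  forall m n, sP A m -> sP A n -> U_ A m `&` U_ A n !=set0 ->
    exists r, [/\ sP A r, ple GQ A m r, ple GQ A n r &
                  U_ A m `&` U_ A n = U_ A r].

Definition local_homeo_on (X : topologicalType) (D : set X) (f : X -> X) :=
  forall x, D x -> exists W : set X,
    [/\ open W /\ W x, W `<=` D,
        {in W &, injective f},
        {within W, continuous f} &
        forall O, open O -> O `<=` W -> open (f @` O)].

(** locally compact action: X locally compact Hausdorff, U(m), V(m) open,
    T_m : U(m) -> V(m) a local homeomorphism (Q is discrete: no topology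
    data needed on Q). *)
Definition lc_action {X : topologicalType} {Q : Type} (A : sg_action X Q) :=
  [/\ hausdorff_space X, locally_compact [set: X] &
      forall m, sP A m ->
        [/\ open (U_ A m), open (V_ A m) &
            @local_homeo_on X (U_ A m) (fun x : X => act A x m)]].

Definition inG {X Q : Type} (GQ : group_str Q) (A : sg_action X Q)
    (x : X) (q : Q) (y : X) :=
  exists m n, [/\ sP A m /\ sP A n, q = gmul GQ m (ginv GQ n),
                  adom A x m, adom A y n & act A x m = act A y n].

Record gelt {X Q : Type} (GQ : group_str Q) (A : sg_action X Q) := GElt {
  gx : X; gq : Q; gy : X; gin : inG GQ A gx gq gy }.
Arguments GElt {X Q GQ A gx gq gy} _.
Arguments gx {X Q GQ A} _.
Arguments gq {X Q GQ A} _.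
Arguments gy {X Q GQ A} _.

HB.instance Definition _ {X Q : Type} (GQ : group_str Q) (A : sg_action X Q) :=
  gen_eqMixin (gelt GQ A).
HB.instance Definition _ {X Q : Type} (GQ : group_str Q) (A : sg_action X Q) :=
  gen_choiceMixin (gelt GQ A).

Definition Zset {X Q : Type} (GQ : group_str Q) (A : sg_action X Q)
    (U : set X) (m n : Q) (V : set X) : set (gelt GQ A) :=
  [set g | [/\ U (gx g) /\ V (gy g), gq g = gmul GQ m (ginv GQ n),
               adom A (gx g) m, adom A (gy g) n &
               act A (gx g) m = act A (gy g) n]].

Definition Zsets {X : topologicalType} {Q : Type} (GQ : group_str Q)
    (A : sg_action X Q) : set (set (gelt GQ A)) :=
  [set Z | exists (U : set X) (m n : Q) (V : set X),
     [/\ open U, open V, sP A m, sP A n & Z = Zset GQ A U m n V]].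

Definition Gpd {X : topologicalType} {Q : Type} (GQ : group_str Q)
  (A : sg_action X Q) := gelt GQ A.

HB.instance Definition _ {X : topologicalType} {Q : Type} (GQ : group_str Q)
    (A : sg_action X Q) := Choice.on (Gpd GQ A).
HB.instance Definition _ {X : topologicalType} {Q : Type} (GQ : group_str Q)
    (A : sg_action X Q) :=
  @isSubBaseTopological.Build (Gpd GQ A) (set (gelt GQ A)) (Zsets GQ A) id.

(** Since membership of the result in G(X,P,T) is part of what has to be
    shown, the operations are defined classically (returning a dummy value
    when the result is not in G(X,P,T)); the theorem asserts separately that
    the results are always in G(X,P,T), so these are the genuine operations. *)
Definition gpd_mul {X : topologicalType} {Q : Type} (GQ : group_str Q)
    (A : sg_action X Q) (g h : Gpd GQ A) : Gpd GQ A :=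
  match pselect (inG GQ A (gx g) (gmul GQ (gq g) (gq h)) (gy h)) with
  | left H => GElt H
  | right _ => g
  end.

Definition gpd_inv {X : topologicalType} {Q : Type} (GQ : group_str Q)
    (A : sg_action X Q) (g : Gpd GQ A) : Gpd GQ A :=
  match pselect (inG GQ A (gy g) (ginv GQ (gq g)) (gx g)) with
  | left H => GElt H
  | right _ => g
  end.

Definition gpd_comp {X : topologicalType} {Q : Type} (GQ : group_str Q)
    (A : sg_action X Q) (g h : Gpd GQ A) : Prop := gy g = gx h.

Definition cocycle {X : topologicalType} {Q : Type} (GQ : group_str Q)
    (A : sg_action X Q) (g : Gpd GQ A) : Q := gq g.

(** A groupoid is given by its composability relation [comp], a
    multiplication [mul] (meaningful on composable pairs) and an inversion
    [inv], subject to the usual (Renault) axioms; its unit space is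
    G^(0) = {g g^-1}, range map r(g) = g g^-1. *)
Definition is_groupoid {G : Type} (comp : G -> G -> Prop)
    (mul : G -> G -> G) (inv : G -> G) :=
  [/\ (forall g h k, comp g h -> comp h k ->
          [/\ comp (mul g h) k, comp g (mul h k) &
              mul (mul g h) k = mul g (mul h k)]),
      (forall g, inv (inv g) = g),
      (forall g, comp g (inv g)) &
      (forall g h, comp g h -> mul (inv g) (mul g h) = h /\
                               mul (mul g h) (inv h) = g)].

Definition unit_space {G : Type} (mul : G -> G -> G) (inv : G -> G) : set G :=
  [set u | exists g, u = mul g (inv g)].

Definition rel_open {G : topologicalType} (Y A : set G) :=
  exists2 O, open O & A = O `&` Y.

Definition local_homeo_to {G : topologicalType} (Y : set G) (f : G -> G) :=
  (forall g, Y (f g)) /\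
  forall g, exists W : set G,
    [/\ open W, W g, {in W &, injective f},
        {within W, continuous f} &
        forall O, open O -> O `<=` W -> rel_open Y (f @` O)].

Definition etale_lch_groupoid {G : topologicalType} (comp : G -> G -> Prop)
    (mul : G -> G -> G) (inv : G -> G) :=
  [/\ is_groupoid comp mul inv,
      hausdorff_space G /\ locally_compact [set: G],
      {within [set p : G * G | comp p.1 p.2], continuous (fun p => mul p.1 p.2)},
      continuous inv &
      local_homeo_to (unit_space mul inv) (fun g => mul g (inv g))].

From mathcomp Require Import all_boot all_classical.
From mathcomp Require Import topology.

(** The sets [Z(U,m,n,V)] form a basis: by directedness two of them containing
    [g = (x,q,y)] can be pushed to a common pair [(ms, ns)], and injectivity of
    [T_s] near [x.m = y.n] lets one pull [x.ms = y.ns] back to [x.m = y.n].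
    Products are continuous because witnesses of composable [g] and [h] glue
    along a common extension [n1 t = m2 t'] that persists nearby.  Over a
    slice [W] on which [T_n] is injective and open, [x |-> (x, mn^-1, y)] with
    [y] the point of [W] such that [y.n = x.m] is a continuous section whose
    image is a basic open set; hence the source map is open, the range map is
    a local homeomorphism onto the unit space, and compact neighbourhoods in
    [X] lift to [G]. *)

Local Open Scope classical_set_scope.

Arguments gmulA {Q g} a b c.
Arguments gmul1l {Q g} a.
Arguments gmul1r {Q g} a.
Arguments gmulVl {Q g} a.
Arguments gmulVr {Q g} a.
Arguments gin {X Q GQ A} _.

Section GroupFacts.
Context {Q : Type} {GQ : group_str Q}.
Local Notation "a ** b" := (gmul GQ a b) (at level 40, left associativity).
Local Notation iv := (ginv GQ).
Local Notation e := (gone GQ).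

Lemma gmulKg a b : iv a ** (a ** b) = b.
Proof. by rewrite gmulA gmulVl gmul1l. Qed.

Lemma gmulgK a b : (a ** b) ** iv b = a.
Proof. by rewrite -gmulA gmulVr gmul1r. Qed.

Lemma gmulgKV a b : (a ** iv b) ** b = a.
Proof. by rewrite -gmulA gmulVl gmul1r. Qed.

Lemma ginv_unique a b : a ** b = e -> b = iv a.
Proof. by move=> ab1; rewrite -(gmulKg a b) ab1 gmul1r. Qed.

Lemma ginvK a : iv (iv a) = a.
Proof. by rewrite -(ginv_unique _ _ (gmulVl a)). Qed.

Lemma ginvM a b : iv (a ** b) = iv b ** iv a.
Proof.
by apply/esym/ginv_unique; rewrite -gmulA (gmulA b) gmulVr gmul1l gmulVr.
Qed.

Lemma ginv1 : iv e = e.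
Proof. by apply/esym/ginv_unique; rewrite gmul1l. Qed.

Lemma gdiv1_eq {m n} : m ** iv n = e -> m = n.
Proof. by move=> mn1; rewrite -(gmulgKV m n) mn1 gmul1l. Qed.

Lemma gdivMr m n s : (m ** s) ** iv (n ** s) = m ** iv n.
Proof. by rewrite ginvM gmulA gmulgK. Qed.

Lemma gdiv_mul_glue m1 n1 m2 n2 t t' : n1 ** t = m2 ** t' ->
  (m1 ** iv n1) ** (m2 ** iv n2) = (m1 ** t) ** iv (n2 ** t').
Proof.
move=> glue; have -> : t = iv n1 ** (m2 ** t') by rewrite -glue gmulKg.
by rewrite ginvM !gmulA gmulgK.
Qed.

Lemma gdiv_eq_mulr m1 n1 m2 n2 p1 p2 :
  m1 ** iv n1 = m2 ** iv n2 -> m1 ** p1 = m2 ** p2 -> n1 ** p1 = n2 ** p2.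
Proof.
have nE m n : n = iv (m ** iv n) ** m by rewrite ginvM ginvK gmulgKV.
by move=> q12 r12; rewrite (nE m1 n1) (nE m2 n2) -!gmulA r12 q12.
Qed.

End GroupFacts.

Section ActionFacts.
Context {X Q : Type} {GQ : group_str Q} {A : sg_action X Q}.
Hypotheses (hP : subsemigroup_with_e GQ (sP A)) (hact : is_right_action GQ A)
  (hdir : directed_action GQ A).
Local Notation "a ** b" := (gmul GQ a b) (at level 40, left associativity).
Local Notation iv := (ginv GQ).
Local Notation e := (gone GQ).

Lemma sP1 : sP A e. Proof. by case: hP. Qed.

Lemma sPM {m n} : sP A m -> sP A n -> sP A (m ** n).
Proof. by case: hP => _; apply. Qed.

Lemma adom1 x : adom A x e. Proof. by case: hact => h _; case: (h x). Qed.

Lemma act1 x : act A x e = x. Proof. by case: hact => h _; case: (h x). Qed.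

Lemma adomM {x m n} : sP A m -> sP A n ->
  adom A x (m ** n) <-> adom A x m /\ adom A (act A x m) n.
Proof. by case: hact => _ h Pm Pn; case: (h x m n Pm Pn). Qed.

Lemma actM {x m n} : sP A m -> sP A n -> adom A x (m ** n) ->
  act A (act A x m) n = act A x (m ** n).
Proof. by case: hact => _ h Pm Pn; case: (h x m n Pm Pn). Qed.

Lemma adom_mul_transfer {x y m n t} : sP A m -> sP A n -> sP A t ->
  adom A x m -> act A x m = act A y n -> adom A y (n ** t) -> adom A x (m ** t).
Proof.
move=> Pm Pn Pt xm xy /(adomM Pn Pt) [_ yt].
by apply/(adomM Pm Pt); rewrite xy.
Qed.

Lemma act_mul_transfer {x y m n t} : sP A m -> sP A n -> sP A t ->
  adom A x m -> act A x m = act A y n -> adom A y (n ** t) ->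
  act A x (m ** t) = act A y (n ** t).
Proof.
move=> Pm Pn Pt xm xy yt.
have xt := adom_mul_transfer Pm Pn Pt xm xy yt.
by rewrite -actM // -actM // xy.
Qed.

Lemma adom_common_ext {y m n} : sP A m -> sP A n -> adom A y m -> adom A y n ->
  exists p p', [/\ sP A p, sP A p', m ** p = n ** p' & adom A y (m ** p)].
Proof.
move=> Pm Pn ym yn.
have [r [_ [p Pp ->] [p' Pp' rE] Ur]] := hdir _ _ Pm Pn (ex_intro _ y (conj ym yn)).
exists p, p'; split => //.
by have : U_ A (m ** p) y by rewrite -Ur.
Qed.

Lemma compose_witnesses {x y z m1 n1 m2 n2 t t'} :
  [/\ sP A m1, sP A n1, sP A m2 & sP A n2] -> sP A t -> sP A t' ->
  n1 ** t = m2 ** t' -> adom A y (n1 ** t) ->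
  adom A x m1 -> act A x m1 = act A y n1 ->
  adom A z n2 -> act A z n2 = act A y m2 ->
  [/\ adom A x (m1 ** t), adom A z (n2 ** t') &
      act A x (m1 ** t) = act A z (n2 ** t')].
Proof.
move=> [Pm1 Pn1 Pm2 Pn2] Pt Pt' glue yt xm1 xy zn2 zy.
have yt' : adom A y (m2 ** t') by rewrite -glue.
split; [exact: adom_mul_transfer yt|exact: adom_mul_transfer yt'|].
by rewrite (act_mul_transfer Pm1 Pn1 Pt xm1 xy yt) glue
  (act_mul_transfer Pn2 Pm2 Pt' zn2 zy yt').
Qed.

Lemma gelt_eq (g h : gelt GQ A) :
  gx g = gx h -> gq g = gq h -> gy g = gy h -> g = h.
Proof.
case: g h => x q y p [x' q' y' p'] /= xx' qq' yy'.
by subst; congr GElt; exact: Prop_irrelevance.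
Qed.

Lemma inG_mul {x y z q1 q2} :
  inG GQ A x q1 y -> inG GQ A y q2 z -> inG GQ A x (q1 ** q2) z.
Proof.
move=> [m1 [n1 [[Pm1 Pn1] -> xm1 yn1 xy]]] [m2 [n2 [[Pm2 Pn2] -> ym2 zn2 yz]]].
have [t [t' [Pt Pt' glue yt]]] := adom_common_ext Pn1 Pm2 yn1 ym2.
have [xt zt' xz] := compose_witnesses (And4 Pm1 Pn1 Pm2 Pn2) Pt Pt' glue yt
  xm1 xy zn2 (esym yz).
exists (m1 ** t), (n2 ** t'); split => //.
- by split; apply: sPM.
- exact: gdiv_mul_glue.
Qed.

Lemma inG_inv {x q y} : inG GQ A x q y -> inG GQ A y (iv q) x.
Proof.
move=> [m [n [[Pm Pn] -> xm yn xy]]].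
by exists n, m; split => //; rewrite ginvM ginvK.
Qed.
End ActionFacts.

Lemma hausdorff_open_sep {T : topologicalType} {a b : T} :
  hausdorff_space T -> a <> b ->
  exists U V : set T, [/\ open U, open V, U a, V b & U `&` V = set0].
Proof.
rewrite open_hausdorff => /(_ a b) + nab; case; first exact/eqP.
move=> [U V] /= [aU bV] [oU oV /eqP UV].
by exists U, V; split => //; exact: set_mem.
Qed.

Lemma compact_nbhs_sub {T : topologicalType} {D : set T} {x : T} :
  hausdorff_space T -> locally_compact [set: T] -> open D -> D x ->
  exists K, [/\ compact K, K `<=` D & nbhs x K].
Proof.
move=> hT lcT oD Dx.
have [V nV [cV _]] := lcT x I.
have {}nV : nbhs x V by move: nV; rewrite withinET.
have nDV : nbhs x (D `&` V) by apply: filterI => //; apply: open_nbhs_nbhs.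
have [C nC clC] := compact_regular hT cV nV nDV.
exists (closure C); split.
- apply: (subclosed_compact _ cV); first exact: closed_closure.
  by move=> z /clC [].
- by move=> z /clC [].
- by apply: filterS nC; apply: subset_closure.
Qed.

Section SemidirectGroupoid.
Variables (X : topologicalType) (Q : Type) (GQ : group_str Q)
  (A : sg_action X Q).
Hypotheses (hP : subsemigroup_with_e GQ (sP A)) (hact : is_right_action GQ A)
  (hdir : directed_action GQ A) (hlc : lc_action A).
Local Notation "a ** b" := (gmul GQ a b) (at level 40, left associativity).
Local Notation iv := (ginv GQ).
Local Notation e := (gone GQ).
Local Notation G := (Gpd GQ A).
Local Notation Z := (Zset GQ A).

Lemma act_local_homeo {m x} : sP A m -> adom A x m -> exists W : set X,
    [/\ open W /\ W x, W `<=` U_ A m,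
        {in W &, injective (fun x : X => act A x m)},
        {within W, continuous (fun x : X => act A x m)} &
        forall O, open O -> O `<=` W -> open ((fun x : X => act A x m) @` O)].
Proof. by move=> Pm xm; case: hlc => _ _ /(_ m Pm) [_ _]; apply. Qed.

Lemma act_continuous_at {m x} : sP A m -> adom A x m ->
  {for x, continuous (fun x : X => act A x m)}.
Proof.
move=> Pm xm; have [W [[oW Wx] _ _ cW _]] := act_local_homeo Pm xm.
by move: cW; rewrite continuous_open_subspace // => /(_ x (mem_set Wx)).
Qed.

Lemma open_U m : sP A m -> open (U_ A m).
Proof. by move=> Pm; case: hlc => _ _ /(_ m Pm) []. Qed.

Lemma open_act_preimage m B : sP A m -> open B ->
  open (U_ A m `&` [set a | B (act A a m)]).
Proof.
move=> Pm oB; rewrite openE => a [am Ba].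
have nB : nbhs a [set x | B (act A x m)].
  exact: (act_continuous_at Pm am) (open_nbhs_nbhs (conj oB Ba)).
have nU : nbhs a (U_ A m) by apply: open_nbhs_nbhs; split => //; apply: open_U.
exact: filterI.
Qed.

Definition Zdata (U : set X) m n (V : set X) :=
  [/\ open U, open V, sP A m & sP A n].

Lemma Zset_sub U m n V U' V' : U' `<=` U -> V' `<=` V ->
  Z U' m n V' `<=` Z U m n V.
Proof. by move=> sU sV g [[/sU ? /sV ?] ? ? ? ?]. Qed.

Lemma Zset_open U m n V : Zdata U m n V -> open (Z U m n V : set G).
Proof.
move=> [oU oV Pm Pn]; exists [set Z U m n V]; last exact: bigcup_set1.
by move=> _ -> /=; apply: finI_from1; exists U, m, n, V.
Qed.

Lemma Zset_nbhs {g : G} {U m n V} : Zdata U m n V -> Z U m n V g ->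
  nbhs g (Z U m n V).
Proof. by move=> zd zg; apply: open_nbhs_nbhs; split => //; apply: Zset_open. Qed.

Lemma Zset_of_elt (g : G) : exists m n, [/\ sP A m, sP A n &
  forall U V, U (gx g) -> V (gy g) -> Z U m n V g].
Proof.
have [m [n [[Pm Pn] hq xm yn xy]]] := gin g.
by exists m, n; split => // U V Ux Vy; split.
Qed.

Lemma Zset_refine {g : G} {U1 m1 n1 V1 p} : Zdata U1 m1 n1 V1 -> sP A p ->
  Z U1 m1 n1 V1 g -> adom A (gx g) (m1 ** p) ->
  exists U V, [/\ open U, open V, U (gx g), V (gy g) &
    Z U (m1 ** p) (n1 ** p) V `<=` Z U1 m1 n1 V1].
Proof.
move=> [oU1 oV1 Pm1 Pn1] Pp [[U1x V1y] hq xm1 yn1 xy] xp.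
have [_ zp] := (adomM hact Pm1 Pp).1 xp.
(* [T_p] is injective near [x.m1 = y.n1]; pull such a window back along [T_m1] and [T_n1]. *)
have [W [[oW Wz] _ inj _ _]] := act_local_homeo Pp zp.
exists (U1 `&` (U_ A m1 `&` [set a | W (act A a m1)])),
       (V1 `&` (U_ A n1 `&` [set b | W (act A b n1)])); split.
- by apply: openI => //; apply: open_act_preimage.
- by apply: openI => //; apply: open_act_preimage.
- by [].
- by split => //; split => //=; rewrite -xy.
move=> h [[[U1h [hm1 Wh]] [V1h [hn1 Wh']]] hq' hm hn hmn].
split => //; first by rewrite hq' gdivMr.
by apply: inj; rewrite ?inE // !(actM hact) // (adomM hact Pn1 Pp).2.
Qed.

Lemma Zset_meet {g : G} {U1 m1 n1 V1 U2 m2 n2 V2} :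
  Zdata U1 m1 n1 V1 -> Zdata U2 m2 n2 V2 ->
  Z U1 m1 n1 V1 g -> Z U2 m2 n2 V2 g ->
  exists s U V, [/\ sP A s, open U, open V, U (gx g) & V (gy g)] /\
    adom A (gx g) (m1 ** s) /\
    Z U (m1 ** s) (n1 ** s) V `<=` Z U1 m1 n1 V1 `&` Z U2 m2 n2 V2.
Proof.
move=> zd1 zd2 g1 g2; have [_ _ Pm1 Pn1] := zd1; have [_ _ Pm2 Pn2] := zd2.
have [_ hq1 xm1 _ _] := g1; have [_ hq2 xm2 _ _] := g2.
have [p1 [p2 [Pp1 Pp2 glue xp1]]] := adom_common_ext hdir Pm1 Pm2 xm1 xm2.
have xp2 : adom A (gx g) (m2 ** p2) by rewrite -glue.
have [U [V [oU oV Ux Vy sub1]]] := Zset_refine zd1 Pp1 g1 xp1.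
have [U' [V' [oU' oV' Ux' Vy' sub2]]] := Zset_refine zd2 Pp2 g2 xp2.
have nglue : n1 ** p1 = n2 ** p2 by apply: gdiv_eq_mulr glue; rewrite -hq1 -hq2.
exists p1, (U `&` U'), (V `&` V'); split; first by split => //; apply: openI.
split => // h hZ; split; first by apply: sub1; apply: Zset_sub hZ => ? [].
by rewrite glue nglue in hZ; apply: sub2; apply: Zset_sub hZ => ? [].
Qed.

Lemma Zset_basis_iter {g : G} {k} {B : set G} :
  filterI_iter (id @` Zsets GQ A) k B -> B g ->
  exists U m n V, [/\ Zdata U m n V, Z U m n V g & Z U m n V `<=` B].
Proof.
elim: k B => [|k IH] B.
  case => [->|[_ [U [m [n [V [oU oV Pm Pn ->]]]]] <-]] Bg.
    have [m [n [Pm Pn gZ]]] := Zset_of_elt g.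
    by exists setT, m, n, setT; split => //; [split => //; apply: openT|apply: gZ].
  by exists U, m, n, V; split.
case=> B1 B1k [B2 B2k <-] [B1g B2g].
have [U1 [m1 [n1 [V1 [zd1 g1 sub1]]]]] := IH B1 B1k B1g.
have [U2 [m2 [n2 [V2 [zd2 g2 sub2]]]]] := IH B2 B2k B2g.
have [s [U [V [[Ps oU oV Ux Vy] [xs sub]]]]] := Zset_meet zd1 zd2 g1 g2.
have [_ _ Pm1 Pn1] := zd1; have [_ hq xm1 yn1 xy] := g1.
have ys := adom_mul_transfer hact Pn1 Pm1 Ps yn1 (esym xy) xs.
exists U, (m1 ** s), (n1 ** s), V; split.
- by split => //; apply: sPM.
- split => //; first by rewrite hq gdivMr.
  exact: (act_mul_transfer hact Pm1 Pn1 Ps xm1 xy ys).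
- by move=> h /sub [/sub1 ? /sub2 ?].
Qed.

Lemma Zset_basis {O : set G} {g} : open O -> O g ->
  exists U m n V, [/\ Zdata U m n V, Z U m n V g & Z U m n V `<=` O].
Proof.
move=> [D sD <-] [B DB Bg].
have := sD _ DB; rewrite /= filterI_iter_finI => -[k _ Bk].
have [U [m [n [V [zd gZ sub]]]]] := Zset_basis_iter Bk Bg.
by exists U, m, n, V; split => // h /sub; exists B.
Qed.

Lemma cvg_to_Zsets {T : Type} (F : set_system T) {FF : Filter F}
    (f : T -> G) (g : G) :
  (forall U m n V, Zdata U m n V -> Z U m n V g -> F (f @^-1` Z U m n V)) ->
  f @ F --> g.
Proof.
move=> fZ B; rewrite /= nbhsE => -[O [oO Og] OB].
have [U [m [n [V [zd gZ sub]]]]] := Zset_basis oO Og.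
by apply: filterS (fZ _ _ _ _ zd gZ) => s /sub /OB.
Qed.

Lemma inG_comp (g h : G) : gpd_comp GQ A g h ->
  inG GQ A (gx g) (gq g ** gq h) (gy h).
Proof.
by move=> gh; apply: (inG_mul hP hact hdir (gin g)); rewrite gh; apply: gin.
Qed.

Section Composition.
Variables g h : G.
Hypothesis gh : gpd_comp GQ A g h.

Lemma gx_mul : gx (gpd_mul GQ A g h) = gx g.
Proof. by rewrite /gpd_mul; case: pselect => // -[]; apply: inG_comp. Qed.

Lemma gq_mul : gq (gpd_mul GQ A g h) = gq g ** gq h.
Proof. by rewrite /gpd_mul; case: pselect => // -[]; apply: inG_comp. Qed.

Lemma gy_mul : gy (gpd_mul GQ A g h) = gy h.
Proof. by rewrite /gpd_mul; case: pselect => // -[]; apply: inG_comp. Qed.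

End Composition.

Lemma gx_inv g : gx (gpd_inv GQ A g) = gy g.
Proof. by rewrite /gpd_inv; case: pselect => // -[]; apply/inG_inv/gin. Qed.

Lemma gq_inv g : gq (gpd_inv GQ A g) = iv (gq g).
Proof. by rewrite /gpd_inv; case: pselect => // -[]; apply/inG_inv/gin. Qed.

Lemma gy_inv g : gy (gpd_inv GQ A g) = gx g.
Proof. by rewrite /gpd_inv; case: pselect => // -[]; apply/inG_inv/gin. Qed.

Lemma comp_inv (g : G) : gpd_comp GQ A g (gpd_inv GQ A g).
Proof. by rewrite /gpd_comp gx_inv. Qed.

Lemma Gpd_groupoid : is_groupoid (gpd_comp GQ A) (gpd_mul GQ A) (gpd_inv GQ A).
Proof.
rewrite /gpd_comp; split.
- move=> g h k gh hk.
  have ghk : gy (gpd_mul GQ A g h) = gx k by rewrite gy_mul.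
  have g_hk : gy g = gx (gpd_mul GQ A h k) by rewrite gx_mul.
  split => //; apply: gelt_eq; by rewrite ?(gx_mul, gq_mul, gy_mul, gmulA).
- by move=> g; apply: gelt_eq; rewrite ?(gx_inv, gq_inv, gy_inv, ginvK).
- by move=> g; rewrite gx_inv.
- move=> g h gh.
  have c1 : gy (gpd_inv GQ A g) = gx (gpd_mul GQ A g h) by rewrite gy_inv gx_mul.
  have c2 : gy (gpd_mul GQ A g h) = gx (gpd_inv GQ A h) by rewrite gy_mul // gx_inv.
  by split; apply: gelt_eq;
    rewrite ?(gx_mul, gq_mul, gy_mul, gx_inv, gq_inv, gy_inv, gmulKg, gmulgK).
Qed.

Lemma Gpd_hausdorff : hausdorff_space G.
Proof.
rewrite open_hausdorff => g h /eqP gh.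
have [m1 [n1 [Pm1 Pn1 gZ]]] := Zset_of_elt g.
have [m2 [n2 [Pm2 Pn2 hZ]]] := Zset_of_elt h.
suff [U1 [V1 [U2 [V2 [[oU1 oV1 oU2 oV2] [g1 h2] dis]]]]] :
    exists U1 V1 U2 V2, [/\ open U1, open V1, open U2 & open V2] /\
      [/\ Z U1 m1 n1 V1 g, Z U2 m2 n2 V2 h &
          Z U1 m1 n1 V1 `&` Z U2 m2 n2 V2 = set0].
  exists (Z U1 m1 n1 V1, Z U2 m2 n2 V2); first by split; apply: mem_set.
  by split; [exact: Zset_open|exact: Zset_open|exact/eqP].
have [hX _ _] := hlc; have oT := @openT X.
have [xx|/(hausdorff_open_sep hX)] := pselect (gx g = gx h); last first.
  move=> [U [V [oU oV Ux Vx UV]]].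
  exists U, setT, V, setT; split; first by split.
  split; [exact: gZ|exact: hZ|].
  rewrite -subset0 in UV; rewrite -subset0.
  by move=> k [[[Uk _] _ _ _ _] [[Vk _] _ _ _ _]]; apply: (UV (gx k)).
have [yy|/(hausdorff_open_sep hX)] := pselect (gy g = gy h); last first.
  move=> [U [V [oU oV Uy Vy UV]]].
  exists setT, U, setT, V; split; first by split.
  split; [exact: gZ|exact: hZ|].
  rewrite -subset0 in UV; rewrite -subset0.
  by move=> k [[[_ Uk] _ _ _ _] [[_ Vk] _ _ _ _]]; apply: (UV (gy k)).
have [qq|nq] := pselect (gq g = gq h); first by exfalso; apply/gh/gelt_eq.
exists setT, setT, setT, setT; split; first by split.
  split; [exact: gZ|exact: hZ|].
have [_ gq1 _ _ _] := gZ setT setT I I; have [_ hq2 _ _ _] := hZ setT setT I I.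
by rewrite -subset0 => k [[_ kq1 _ _ _] [_ kq2 _ _ _]];
  apply: nq; rewrite gq1 hq2 -kq1 -kq2.
Qed.

Lemma cocycle_continuous (q : Q) : open (cocycle GQ A @^-1` [set q]).
Proof.
rewrite openE => g /= gq_q.
have [m [n [Pm Pn gZ]]] := Zset_of_elt g.
have zd : Zdata setT m n setT by split => //; apply: openT.
have gmn := gZ setT setT I I.
apply: filterS (Zset_nbhs zd gmn) => k [_ kq _ _ _].
by have [_ gq' _ _ _] := gmn; rewrite /preimage /cocycle /= kq -gq'.
Qed.

Lemma Gpd_inv_continuous : continuous (gpd_inv GQ A).
Proof.
move=> g; apply: (cvg_to_Zsets (nbhs g)) => U m n V [oU oV Pm Pn].
rewrite /Zset /= gx_inv gy_inv gq_inv => -[[Uy Vx] hq yn xm xy].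
have hq' : gq g = n ** iv m by rewrite -[gq g](@ginvK _ GQ) hq ginvM ginvK.
apply: filterS (@Zset_nbhs g V n m U (And4 oV oU Pn Pm) _); last by split.
move=> k [[Vk Uk] kq kn km kx]; rewrite /preimage /Zset /= gx_inv gy_inv gq_inv.
by split => //; rewrite kq ginvM ginvK.
Qed.

Lemma Zset_mul {g h : G} {U m1 n1 m2 n2 V t t'} :
  [/\ sP A m1, sP A n1, sP A m2 & sP A n2] -> sP A t -> sP A t' ->
  n1 ** t = m2 ** t' -> gpd_comp GQ A g h ->
  Z U m1 n1 (U_ A (n1 ** t)) g -> Z setT m2 n2 V h ->
  Z U (m1 ** t) (n2 ** t') V (gpd_mul GQ A g h).
Proof.
move=> Ps Pt Pt' glue gh [[Ux yt] gq1 xm1 _ xy] [[_ Vz] gq2 ym2 zn2 yz].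
rewrite -gh in ym2 yz.
have [xt zt' xz] := compose_witnesses hact Ps Pt Pt' glue yt xm1 xy zn2 (esym yz).
rewrite /Zset /= gx_mul // gy_mul // gq_mul // gq1 gq2; split => //.
exact: gdiv_mul_glue.
Qed.

Lemma Gpd_mul_continuous :
  {within [set p : G * G | gpd_comp GQ A p.1 p.2],
    continuous (fun p => gpd_mul GQ A p.1 p.2)}.
Proof.
apply/subspace_continuousP => -[g h] /= gh.
apply: cvg_to_Zsets => U m n V zd; rewrite /from_subspace /= => ghZ.
have [m1 [n1 [Pm1 Pn1 gZ]]] := Zset_of_elt g.
have [m2 [n2 [Pm2 Pn2 hZ]]] := Zset_of_elt h.
have P12 := And4 Pm1 Pn1 Pm2 Pn2.
have [_ _ xm1 yn1 xy] := gZ setT setT I I.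
have [_ _ ym2 _ _] := hZ setT setT I I; rewrite -gh in ym2.
have [p1 [p2 [Pp1 Pp2 glue yp1]]] := adom_common_ext hdir Pn1 Pm2 yn1 ym2.
have ghZ0 : Z setT (m1 ** p1) (n2 ** p2) setT (gpd_mul GQ A g h).
  exact: Zset_mul P12 Pp1 Pp2 glue gh (gZ _ _ I yp1) (hZ _ _ I I).
have zd0 : Zdata setT (m1 ** p1) (n2 ** p2) setT.
  by split; try apply: openT; apply: (sPM hP).
have [s [U' [V' [[Ps' oU' oV' U'x V'y] [xs sub]]]]] := Zset_meet zd0 zd ghZ0 ghZ.
rewrite gx_mul // in U'x xs; rewrite gy_mul // in V'y.
have Pt := sPM hP Pp1 Ps'; have Pt' := sPM hP Pp2 Ps'.
rewrite -gmulA in xs.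
have ys := adom_mul_transfer hact Pn1 Pm1 Pt yn1 (esym xy) xs.
have glue' : n1 ** (p1 ** s) = m2 ** (p2 ** s) by rewrite !gmulA glue.
exists (Z U' m1 n1 (U_ A (n1 ** (p1 ** s))), Z setT m2 n2 V').
  split; apply: Zset_nbhs.
  - by split => //; apply/open_U/(sPM hP).
  - exact: gZ.
  - by split => //; apply: openT.
  - by apply: hZ; rewrite -?gh.
move=> [g' h'] /= [g'Z h'Z] g'h'.
suff /sub[] : Z U' (m1 ** p1 ** s) (n2 ** p2 ** s) V' (gpd_mul GQ A g' h') by [].
by rewrite -!gmulA; exact: Zset_mul P12 Pt Pt' glue' g'h' g'Z h'Z.
Qed.

Definition slice_dom m n (W : set X) :=
  U_ A m `&` [set a | ((fun b => act A b n) @` W) (act A a m)].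

Definition slice m n (W : set X) :=
  [/\ sP A m, sP A n, open W, W `<=` U_ A n &
      {in W &, injective (fun b => act A b n)} /\
      forall O, open O -> O `<=` W -> open ((fun b => act A b n) @` O)].

Lemma slice_at {m n y} {V : set X} : sP A m -> sP A n -> adom A y n ->
  open V -> V y -> exists W, [/\ slice m n W, W y & W `<=` V].
Proof.
move=> Pm Pn yn oV Vy.
have [W0 [[oW0 W0y] W0U inj _ oimg]] := act_local_homeo Pn yn.
exists (W0 `&` V); split => //; split => //; first exact: openI.
- by move=> b [/W0U].
- split; first by move=> b b' /set_mem[Wb _] /set_mem[Wb' _]; apply: inj; rewrite inE.
  by move=> O oO OW; apply: oimg => // b /OW [].
Qed.

Section Slice.
Context {m n : Q} {W : set X} {g0 : G}.
Hypothesis hs : slice m n W.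
Let Pm : sP A m. Proof. by case: hs. Qed.
Let Pn : sP A n. Proof. by case: hs. Qed.
Let oW : open W. Proof. by case: hs. Qed.
Let WU : W `<=` U_ A n. Proof. by case: hs. Qed.
Let Winj : {in W &, injective (fun b => act A b n)}.
Proof. by case: hs => _ _ _ _ []. Qed.
Let Wopen : forall O, open O -> O `<=` W -> open ((fun b => act A b n) @` O).
Proof. by case: hs => _ _ _ _ []. Qed.

Lemma open_slice_dom_sub W' : W' `<=` W -> open W' -> open (slice_dom m n W').
Proof. by move=> sW' oW'; apply: open_act_preimage => //; apply: Wopen. Qed.

Lemma open_slice_dom : open (slice_dom m n W).
Proof. exact: open_slice_dom_sub. Qed.

Definition slice_lift (a : X) : X :=
  match pselect (exists b, W b /\ act A b n = act A a m) with
  | left H => proj1_sig (cid H)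
  | right _ => a
  end.

Lemma slice_liftP {a} : slice_dom m n W a ->
  W (slice_lift a) /\ act A (slice_lift a) n = act A a m.
Proof.
move=> [am [b Wb ba]]; rewrite /slice_lift; case: pselect => [H|[]].
  exact: proj2_sig (cid H).
by exists b.
Qed.

Lemma slice_lift_unique {a b} : slice_dom m n W a -> W b ->
  act A b n = act A a m -> slice_lift a = b.
Proof.
move=> Da Wb ba; have [Wl la] := slice_liftP Da.
by apply: Winj; rewrite ?inE // la ba.
Qed.

Lemma inG_slice a : slice_dom m n W a -> inG GQ A a (m ** iv n) (slice_lift a).
Proof.
move=> Da; have [Wl la] := slice_liftP Da.
by exists m, n; split => //; [case: Da|apply: WU].
Qed.

(* The default [g0] is only returned outside [slice_dom m n W]. *)
Definition slice_section (a : X) : G :=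
  match pselect (inG GQ A a (m ** iv n) (slice_lift a)) with
  | left H => GElt H
  | right _ => g0
  end.

Local Notation phi := slice_section.

Lemma gx_section a : slice_dom m n W a -> gx (phi a) = a.
Proof. by move=> Da; rewrite /phi; case: pselect => // -[]; apply: inG_slice. Qed.

Lemma gq_section a : slice_dom m n W a -> gq (phi a) = m ** iv n.
Proof. by move=> Da; rewrite /phi; case: pselect => // -[]; apply: inG_slice. Qed.

Lemma gy_section a : slice_dom m n W a -> gy (phi a) = slice_lift a.
Proof. by move=> Da; rewrite /phi; case: pselect => // -[]; apply: inG_slice. Qed.

Lemma Zset_section {a} : slice_dom m n W a -> Z (slice_dom m n W) m n W (phi a).
Proof.
move=> Da; have [Wl la] := slice_liftP Da.
rewrite /Zset /= gx_section // gy_section // gq_section //.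
by split => //; [case: Da|apply: WU].
Qed.

Lemma section_gx (h : G) : Z (slice_dom m n W) m n W h -> h = phi (gx h).
Proof.
move=> [[Dh Wh] hq _ _ hmn]; apply: gelt_eq.
- by rewrite gx_section.
- by rewrite gq_section.
- by rewrite gy_section // (slice_lift_unique Dh Wh).
Qed.

Lemma section_continuous a : slice_dom m n W a -> {for a, continuous phi}.
Proof.
move=> Da; apply: (cvg_to_Zsets (nbhs a)) => U2 m2 n2 V2 zd2 Z2.
have zdD : Zdata (slice_dom m n W) m n W.
  by split => //; apply: open_slice_dom.
have [s [U [V [[Ps oU oV Ua Vl] [ams sub]]]]] := Zset_meet zdD zd2 (Zset_section Da) Z2.
rewrite gx_section // in Ua ams; rewrite gy_section // in Vl.
have [Wl la] := slice_liftP Da.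
(* Near [a] the lift stays in [V] because [T_n] is open on [V `&` W]. *)
pose N := U `&` U_ A (m ** s) `&` slice_dom m n (V `&` W).
have oN : open N.
  apply: openI; first by apply: openI => //; apply/open_U/(sPM hP).
  by apply: open_slice_dom_sub; [move=> ? []|apply: openI].
have Na : N a by split; [split|split; [case: Da|exists (slice_lift a)]].
apply: filterS (open_nbhs_nbhs (conj oN Na)) => a' [[Ua' a's] [a'm [b [Vb Wb] ba']]].
have Da' : slice_dom m n W a' by split => //; exists b.
have lb := slice_lift_unique Da' Wb ba'.
have bs := adom_mul_transfer hact Pn Pm Ps (WU _ Wb) ba' a's.
suff /sub[] : Z U (m ** s) (n ** s) V (phi a') by [].
rewrite /Zset /= gx_section // gy_section // gq_section // lb gdivMr.
by split => //; exact: (act_mul_transfer hact Pm Pn Ps a'm (esym ba') bs).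
Qed.

End Slice.

Lemma open_gx_image (O : set G) : open O -> open (gx @` O).
Proof.
move=> oO; rewrite openE => _ [h Oh <-].
have [U [m [n [V [[oU oV Pm Pn] hZ sub]]]]] := Zset_basis oO Oh.
have [[Ux Vy] _ xm yn xy] := hZ.
have [W [hs Wy WV]] := slice_at Pm Pn yn oV Vy.
have Dx : slice_dom m n W (gx h) by split => //; exists (gy h).
have oD : open (slice_dom m n W `&` U).
  by apply: openI => //; apply: open_slice_dom.
apply: filterS (open_nbhs_nbhs (conj oD (conj Dx Ux))) => a [Da Ua].
exists (@slice_section m n W h a); last exact: gx_section.
have [[_ Wl] ? ? ? ?] := Zset_section (g0 := h) hs Da.
by apply: sub; split => //; split; [rewrite gx_section|apply: WV].
Qed.

Lemma Gpd_locally_compact : locally_compact [set: G].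
Proof.
move=> g _; have [hX lcX _] := hlc.
have [m [n [[Pm Pn] hq xm yn xy]]] := gin g.
have [W [hs Wy _]] := slice_at Pm Pn yn (@openT X) I.
have oW : open W by case: hs.
have Dx : slice_dom m n W (gx g) by split => //; exists (gy g).
have [K [cK KD nK]] := compact_nbhs_sub hX lcX (open_slice_dom hs) Dx.
(* [phi] inverts [gx] on [Z (slice_dom m n W) m n W], so it lifts [K] to a compact neighbourhood of [g]. *)
pose phi := @slice_section m n W g.
have [O' [oO' O'x] O'K] : exists2 O', open_nbhs (gx g) O' & O' `<=` K.
  by move: nK; rewrite nbhsE.
exists (phi @` K).
  rewrite withinET; apply: filterS (@Zset_nbhs g O' m n W (And4 oO' oW Pm Pn) _); last by split.
  move=> h hZ; exists (gx h); first by case: hZ => -[/O'K].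
  apply: esym; apply: (section_gx (g0 := g) hs).
  by apply: Zset_sub hZ => // z /O'K /KD.
have cphiK : compact (phi @` K).
  apply: continuous_compact => //.
  by apply: continuous_in_subspaceT => a /set_mem /KD; apply: section_continuous.
by split => //; apply: compact_closed => //; apply: Gpd_hausdorff.
Qed.

Local Notation rng := (fun g : G => gpd_mul GQ A g (gpd_inv GQ A g)).

Lemma gx_rng (g : G) : gx (rng g) = gx g.
Proof. by rewrite gx_mul //; apply: comp_inv. Qed.

Lemma gq_rng (g : G) : gq (rng g) = e.
Proof. by rewrite gq_mul ?gq_inv ?gmulVr //; apply: comp_inv. Qed.

Lemma gy_rng (g : G) : gy (rng g) = gx g.
Proof. by rewrite gy_mul ?gy_inv //; apply: comp_inv. Qed.

Lemma rng_continuous : continuous rng.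
Proof.
move=> g; apply: (cvg_to_Zsets (nbhs g)) => U m n V [oU oV Pm Pn].
rewrite /Zset /= gx_rng gy_rng gq_rng => -[[Ux Vx] hq xm _ _].
have mn := gdiv1_eq (esym hq); subst n.
have [m1 [n1 [Pm1 Pn1 gZ]]] := Zset_of_elt g.
have oUV : open (U `&` V `&` U_ A m) by apply: openI; [apply: openI|apply: open_U].
apply: filterS (@Zset_nbhs g _ m1 n1 setT (And4 oUV openT Pm1 Pn1) (gZ _ _ _ I)).
  move=> k [[[[Uk Vk] km] _] _ _ _ _].
  by rewrite /preimage /Zset /= gx_rng gy_rng gq_rng gmulVr.
by [].
Qed.

Lemma rng_local_homeo :
  local_homeo_to (unit_space (gpd_mul GQ A) (gpd_inv GQ A)) rng.
Proof.
split=> [g|g]; first by exists g.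
have [m [n [[Pm Pn] hq xm yn xy]]] := gin g.
have [W [[_ _ oW WU [Winj _]] Wy _]] := slice_at Pm Pn yn (@openT X) I.
exists (Z setT m n W); split.
- by apply: Zset_open; split => //; apply: openT.
- by split.
- move=> h1 h2 /set_mem [[_ W1] q1 _ _ e1] /set_mem [[_ W2] q2 _ _ e2] rh12.
  have x12 : gx h1 = gx h2 by rewrite -(gx_rng h1) rh12 gx_rng.
  apply: gelt_eq => //; first by rewrite q1 q2.
  by apply: Winj; rewrite ?inE // -e1 -e2 x12.
- exact/continuous_subspaceT/rng_continuous.
move=> O oO _; exists (Z (gx @` O) e e (gx @` O)).
  by apply: Zset_open; split; try exact: open_gx_image; exact: sP1.
rewrite eqEsubset; split.
  move=> _ [h Oh <-]; split; last by exists h.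
  rewrite /Zset /= gx_rng gy_rng gq_rng ginv1 gmul1r.
  by split => //; [split; exists h|exact: adom1|exact: adom1].
move=> k [[[[h Oh hk] _] kq _ _ kk] _].
exists h => //; apply: gelt_eq.
- by rewrite gx_rng.
- by rewrite gq_rng kq ginv1 gmul1r.
- by rewrite gy_rng hk; rewrite !act1 in kk.
Qed.

End SemidirectGroupoid.

Theorem proposition5p12 (X : topologicalType) (Q : Type) (GQ : group_str Q)
    (A : sg_action X Q)
    (hP : subsemigroup_with_e GQ (sP A))
    (hact : is_right_action GQ A)
    (hdir : directed_action GQ A)
    (hlc : lc_action A) :
  (* the groupoid operations land in G(X,P,T) *)
  (forall g h : Gpd GQ A, gpd_comp GQ A g h ->
     inG GQ A (gx g) (gmul GQ (gq g) (gq h)) (gy h)) /\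
  (forall g : Gpd GQ A, inG GQ A (gy g) (ginv GQ (gq g)) (gx g)) /\
  (* (a) étale locally compact Hausdorff groupoid *)
  etale_lch_groupoid (gpd_comp GQ A) (gpd_mul GQ A) (gpd_inv GQ A) /\
  (* (b) the canonical cocycle c(x,q,y) = q is continuous (Q discrete) *)
  (forall q : Q, open (cocycle GQ A @^-1` [set q])).
Proof.
split; first exact: inG_comp.
split; first by move=> g; apply/inG_inv/gin.
split; last exact: cocycle_continuous.
split.
- exact: Gpd_groupoid.
- by split; [exact: Gpd_hausdorff|exact: Gpd_locally_compact].
- exact: Gpd_mul_continuous.
- exact: Gpd_inv_continuous.
- exact: rng_local_homeo.
Qed.
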